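(* Consider the setting described in the context, assume A1–A5, and let $s=\frac{r}{2-4r}$. For any constants $c>0$ and $C>0$ there is $\gamma>0$ such that, whenever $f_n=\sum_{j=1}^{ck_n}\theta_{nj}\phi_j$ and $\|f_n\|\le Cn^{-r}$, one has $f_n\in\bar{\mathbb{B}}^s_{2\infty}(\gamma)$.
   Context: Fix $\sigma>0$, $0<r<1/2$ and an orthonormal basis $(\phi_j)_{j\ge1}$ of $\mathbb{L}_2(0,1)$. For each $n$ nonnegative weights $\kappa_{nj}^2$ are given with $\rho_n=\sum_j\kappa_{nj}^2<\infty$; $k_n=\sup\{k:\sum_{j<k}\kappa_{nj}^2\le\rho_n/2\}$ and $\kappa_n^2=\kappa_{nk_n}^2$. Assumptions: (A1) $j\mapsto\kappa_{nj}^2$ decreasing; (A2) $C_1<\sigma^{-4}n^2\sum_j\kappa_{nj}^4<C_2$ for all $n$; (A3) $c_1n^{-2r}\le\rho_n\le c_2n^{-2r}$; (A4) $\exists C_1>0,\lambda>1$: $\kappa^2_{n,[(1+\delta)k_n]}<C_1(1+\delta)^{-\lambda}\kappa_n^2$ for all $\delta>0,n$; (A5) $\kappa_{n1}^2\asymp\kappa_n^2$ and for each $c>1$ there is $C>0$ with $\kappa^2_{n,[ck_n]}\ge C\kappa_n^2$. $\bar{\mathbb{B}}^s_{2\infty}(P_0)=\{f=\sum_j\theta_j\phi_j:\ \sup_{\lambda>0}\lambda^{2s}\sum_{j>\lambda}\theta_j^2\le P_0\}$. *)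

From HB Require Import structures.
From mathcomp Require Import all_boot all_order all_algebra.
From mathcomp Require Import all_classical all_reals all_analysis.
Set Implicit Arguments. Unset Strict Implicit. Unset Printing Implicit Defensive.
Import Order.TTheory GRing.Theory Num.Theory.
Import numFieldNormedType.Exports.
Local Open Scope ring_scope.

Section Defs.
Variable R : realType.

(* partial sums over indices 1 <= j < N (sequences are indexed from j = 1;
   the value at j = 0 is never used) *)
Definition psum (a : nat -> R) (N : nat) : R := \sum_(1 <= j < N) a j.

Definition ssum (a : nat -> R) : R := limn (psum a).

(* rho_n = sum_j kappa_{nj}^2 ; kappa2 n j stands for kappa_{nj}^2 *)
Definition rho (kappa2 : nat -> nat -> R) (n : nat) : R := ssum (kappa2 n).

Definition is_kn (kappa2 : nat -> nat -> R) (n k : nat) : Prop :=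
  psum (kappa2 n) k <= rho kappa2 n / 2 /\
  forall k' : nat, psum (kappa2 n) k' <= rho kappa2 n / 2 -> (k' <= k)%N.

(* L2 norm of f = sum_j theta_j phi_j, via Parseval *)
Definition l2norm (theta : nat -> R) : R := Num.sqrt (ssum (fun j => theta j ^+ 2)).

Definition tail (theta : nat -> R) (lam : R) : R :=
  limn (fun N => \sum_(1 <= j < N | lam < j%:R) theta j ^+ 2).

(* f = sum_j theta_j phi_j belongs to \bar B^s_{2 infty}(P0) *)
Definition besov_ball (s P0 : R) (theta : nat -> R) : Prop :=
  forall lam : R, 0 < lam -> lam `^ (2 * s) * tail theta lam <= P0.

End Defs.

From HB Require Import structures.
From mathcomp Require Import all_boot all_order all_algebra.
From mathcomp Require Import all_classical all_reals all_analysis.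
From mathcomp Require Import lra ring.
Set Implicit Arguments. Unset Strict Implicit. Unset Printing Implicit Defensive.
Import Order.TTheory GRing.Theory Num.Theory.
Import numFieldNormedType.Exports.
Local Open Scope ring_scope.

(* A function band-limited to the indices j <= L satisfies
   lam^(2s) sum_(j > lam) theta_j^2 <= L^(2s) ||f||^2 for every lam > 0, so it
   suffices to show k_n = O(n^(2-4r)): then (c k_n)^(2s) ||f_n||^2 is
   O(n^(2r) n^(-2r)), because (2-4r) 2s = 2r.
   The bound on k_n: by monotonicity (A1) and the definition of k_n,
   (k_n - 1) kappa_n^2 <= rho_n / 2, while
   sum_j kappa_nj^4 <= kappa_n1^2 rho_n <= b kappa_n^2 rho_n (A1, A5).  The lower
   bound in A2 then gives (k_n - 1) C1 <= sigma^-4 b n^2 rho_n^2 / 2, and the upper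
   bound in A3 turns rho_n^2 into c2^2 n^(-4r). *)

Section Series.
Variable R : realType.
Implicit Types (a : nat -> R) (P : pred nat).

Lemma limn_sum_eventually0 a P M :
  (forall j, (M < j)%N -> a j = 0) ->
  limn (fun N => \sum_(1 <= j < N | P j) a j) = \sum_(1 <= j < M.+1 | P j) a j.
Proof.
move=> a0; apply: cvg_lim => //; apply: cvg_near_cst; near=> N.
have MN : (M.+1 <= N)%N by near: N; exact: nbhs_infty_ge.
rewrite (@big_cat_nat _ _ _ M.+1 1 N) //= [X in _ + X]big1_seq ?addr0 // => j.
by rewrite mem_index_iota => /andP[_ /andP[Mj _]]; exact: a0.
Unshelve. all: by end_near.
Qed.

Lemma psum_nondecreasing a : (forall j, 0 <= a j) -> nondecreasing_seq (psum a).
Proof.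
move=> a_ge0 N N' NN'; rewrite /psum.
have [N_le1|N_gt1] := leqP N 1; first by rewrite big_geq // sumr_ge0.
by rewrite (@big_cat_nat _ _ _ N 1 N') ?(ltnW N_gt1) //= lerDl sumr_ge0.
Qed.

Lemma psum_le_ssum a N : (forall j, 0 <= a j) -> cvgn (psum a) -> psum a N <= ssum a.
Proof.
by move=> a_ge0 a_cvg; apply: nondecreasing_cvgn_le => //; exact: psum_nondecreasing.
Qed.

Section Nonincreasing.
Variable a : nat -> R.
Hypothesis a_noninc : forall j j', (1 <= j)%N -> (j <= j')%N -> a j' <= a j.

Lemma psum_ge_last k : k.-1%:R * a k <= psum a k.
Proof.
rewrite /psum mulr_natl -subn1 -sumr_const_nat.
by apply: ler_sum_nat => j /andP[j_ge1 jk]; apply: a_noninc => //; exact: ltnW.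
Qed.

Lemma ssum_sqr_le : (forall j, 0 <= a j) -> cvgn (psum a) ->
  ssum (fun j => a j ^+ 2) <= a 1%N * ssum a.
Proof.
move=> a_ge0 a_cvg.
have psum_sqr_le N : psum (fun j => a j ^+ 2) N <= a 1%N * ssum a.
  apply: (@le_trans _ _ (a 1%N * psum a N)); last first.
    by rewrite ler_wpM2l ?psum_le_ssum.
  rewrite /psum big_distrr /=; apply: ler_sum_nat => j /andP[j_ge1 _].
  by rewrite expr2 ler_wpM2r ?a_noninc.
have a2_ge0 j : 0 <= a j ^+ 2 by rewrite sqr_ge0.
apply: limr_le; last exact: nearW.
apply: nondecreasing_is_cvgn; first exact: psum_nondecreasing.
by exists (a 1%N * ssum a) => _ [N _ <-].
Qed.

End Nonincreasing.

Lemma besov_ball_bandlimited (s L P0 : R) (theta : nat -> R) :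
  0 <= s -> 0 <= L -> (forall j, L < j%:R -> theta j = 0) ->
  L `^ (2 * s) * l2norm theta ^+ 2 <= P0 -> besov_ball s P0 theta.
Proof.
move=> s_ge0 L_ge0 theta_band LP0 lam lam_gt0.
set M := Num.truncn L.
have sqr0 j : (M < j)%N -> theta j ^+ 2 = 0.
  by move=> Mj; rewrite theta_band ?expr0n // -truncn_lt_nat.
have theta2_ge0 j : 0 <= theta j ^+ 2 by rewrite sqr_ge0.
have -> : tail theta lam = \sum_(1 <= j < M.+1 | lam < j%:R) theta j ^+ 2.
  exact: limn_sum_eventually0.
have norm2 : l2norm theta ^+ 2 = \sum_(1 <= j < M.+1) theta j ^+ 2.
  have ssum_eq : ssum (fun j => theta j ^+ 2) = \sum_(1 <= j < M.+1) theta j ^+ 2.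
    exact: (limn_sum_eventually0 xpredT sqr0).
  by rewrite /l2norm ssum_eq sqr_sqrtr // sumr_ge0.
have [L_le_lam|lam_lt_L] := leP L lam.
  rewrite big1 ?mulr0 => [|j lam_j].
    by apply: le_trans _ LP0; rewrite mulr_ge0 ?powR_ge0 ?sqr_ge0.
  by rewrite theta_band ?expr0n // (le_lt_trans L_le_lam).
apply: le_trans _ LP0; apply: ler_pM; rewrite ?powR_ge0 ?sumr_ge0 //.
  by apply: ge0_ler_powR; rewrite ?nnegrE ?mulr_ge0 ?(ltW lam_gt0) ?(ltW lam_lt_L).
rewrite norm2 [leLHS]big_mkcond /= ler_sum_nat // => j _.
by case: ifP.
Qed.

End Series.

Section Rates.
Variable R : realType.

Lemma powR_2_add_2mul (x e : R) : 0 < x ->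
  x `^ (2 + 2 * e) = x ^+ 2 * (x `^ e) ^+ 2.
Proof.
move=> x_gt0; rewrite -(powR_mulrn 2 (powR_ge0 _ _)) -(powR_mulrn 2 (ltW x_gt0)).
by rewrite -powRrM -powRD ?(gt_eqF x_gt0) ?implybT //; f_equal; ring.
Qed.

Lemma powR_pow_div_cancel (x e r : R) : 0 < x -> e != 0 ->
  (x `^ e) `^ (2 * (r / e)) * (x `^ (- r)) ^+ 2 = 1.
Proof.
move=> x_gt0 e_neq0; rewrite -(powR_mulrn 2 (powR_ge0 _ _)) -!powRrM.
by rewrite -powRD ?(gt_eqF x_gt0) ?implybT // (_ : _ + _ = 0) ?powRr0 //; field.
Qed.

End Rates.

Section EffectiveDimension.
Variables (R : realType) (sigma r C1 c2 b : R).
Variables (kappa2 : nat -> nat -> R) (k : nat -> nat).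
Hypothesis kappa2_ge0 : forall n j, 0 <= kappa2 n j.
Hypothesis kappa2_summable : forall n, cvgn (psum (kappa2 n)).
Hypothesis k_is_kn : forall n, (1 <= n)%N -> is_kn kappa2 n (k n).
Hypothesis kappa2_noninc : forall n j j', (1 <= n)%N -> (1 <= j)%N -> (j <= j')%N ->
  kappa2 n j' <= kappa2 n j.
Hypothesis b_ge0 : 0 <= b.
Hypothesis kappa2_first_le : forall n, (1 <= n)%N -> kappa2 n 1%N <= b * kappa2 n (k n).
Hypothesis C1_lt_sum4 : forall n, (1 <= n)%N ->
  C1 < sigma ^- 4 * n%:R ^+ 2 * ssum (fun j => kappa2 n j ^+ 2).

Lemma rho_ge0 n : 0 <= rho kappa2 n.
Proof.
have := psum_le_ssum 0 (@kappa2_ge0 n) (@kappa2_summable n).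
by rewrite /psum big_geq.
Qed.

Lemma kn_pred_mul_le n : (1 <= n)%N ->
  (k n).-1%:R * C1 <= sigma ^- 4 * b * n%:R ^+ 2 * rho kappa2 n ^+ 2 / 2.
Proof.
move=> n_ge1.
have noninc j j' : (1 <= j)%N -> (j <= j')%N -> kappa2 n j' <= kappa2 n j.
  exact: kappa2_noninc.
have [psum_k_le _] := k_is_kn n_ge1.
have kappa_k_le : (k n).-1%:R * kappa2 n (k n) <= rho kappa2 n / 2.
  exact: le_trans (psum_ge_last noninc _) psum_k_le.
have sum4_le : ssum (fun j => kappa2 n j ^+ 2) <= b * kappa2 n (k n) * rho kappa2 n.
  apply: le_trans (ssum_sqr_le noninc (@kappa2_ge0 n) (@kappa2_summable n)) _.
  by rewrite ler_wpM2r ?rho_ge0 ?kappa2_first_le.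
set A := sigma ^- 4 * n%:R ^+ 2; set rh := rho kappa2 n in kappa_k_le sum4_le *.
set q := kappa2 n (k n) in kappa_k_le sum4_le *.
have A_ge0 : 0 <= A by rewrite mulr_ge0 ?invr_ge0 ?exprn_even_ge0.
have C1_le : C1 <= A * b * rh * q.
  apply/ltW/(lt_le_trans (C1_lt_sum4 n_ge1)); rewrite -/A.
  have -> : A * b * rh * q = A * (b * q * rh) by ring.
  exact: ler_wpM2l.
have -> : sigma ^- 4 * b * n%:R ^+ 2 * rh ^+ 2 / 2 = A * b * rh * (rh / 2).
  by rewrite /A; ring.
have Abr_ge0 : 0 <= A * b * rh by apply: mulr_ge0; [exact: mulr_ge0 | exact: rho_ge0].
apply: le_trans (ler_wpM2l (ler0n _ _) C1_le) _.
by rewrite mulrCA ler_wpM2l.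
Qed.

Hypothesis C1_gt0 : 0 < C1.
Hypothesis r_le_half : r <= 1 / 2.
Hypothesis rho_le : forall n, (1 <= n)%N -> rho kappa2 n <= c2 * n%:R `^ (- (2 * r)).

Lemma kn_le_rate : exists K : R, 0 < K /\
  forall n, (1 <= n)%N -> (k n)%:R <= K * n%:R `^ (2 - 4 * r).
Proof.
set K0 := sigma ^- 4 * b * c2 ^+ 2 / (2 * C1).
have K0_ge0 : 0 <= K0.
  apply: divr_ge0; last by rewrite mulr_ge0 // ltW.
  by rewrite mulr_ge0 ?sqr_ge0 // mulr_ge0 ?invr_ge0 ?exprn_even_ge0.
exists (K0 + 1); split => [|n n_ge1]; first lra.
have n_ge1R : 1 <= n%:R :> R by rewrite ler1n.
set T := n%:R `^ (2 - 4 * r).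
have T_ge1 : 1 <= T.
  by rewrite -(powRr0 n%:R); apply: ler_powR => //; move: r_le_half; lra.
have kpred_le : (k n).-1%:R <= K0 * T.
  rewrite -(ler_pM2r C1_gt0); apply: le_trans (kn_pred_mul_le n_ge1) _.
  rewrite /T (_ : 2 - 4 * r = 2 + 2 * - (2 * r)); last by ring.
  rewrite powR_2_add_2mul ?ltr0n //.
  set P := n%:R `^ (- (2 * r)).
  have -> : K0 * (n%:R ^+ 2 * P ^+ 2) * C1 = sigma ^- 4 * b * n%:R ^+ 2 * (c2 * P) ^+ 2 / 2.
    (* abstracting [sigma ^- 4] spares [field] the side condition [sigma != 0] *)
    by rewrite /K0; set S4 := sigma ^- 4; field; rewrite gt_eqF.
  rewrite ler_wpM2r ?ler_wpM2l ?mulr_ge0 ?invr_ge0 ?exprn_even_ge0 //.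
  by rewrite !expr2 ler_pM ?rho_ge0 ?rho_le.
have : (k n)%:R <= (k n).-1%:R + 1 :> R by rewrite natr1 ler_nat leqSpred.
lra.
Qed.

End EffectiveDimension.

Theorem lemma3 (R : realType) (sigma r : R) (kappa2 : nat -> nat -> R)
  (k : nat -> nat)
  (hsigma : 0 < sigma) (hr0 : 0 < r) (hr1 : r < 1 / 2)
  (hnonneg : forall n j, 0 <= kappa2 n j)
  (hsumm : forall n, cvgn (psum (kappa2 n)))
  (hk : forall n, (1 <= n)%N -> is_kn kappa2 n (k n))
  (* A1 *)
  (A1 : forall n j j', (1 <= n)%N -> (1 <= j)%N -> (j <= j')%N ->
          kappa2 n j' <= kappa2 n j)
  (* A2 *)
  (A2 : exists C1 C2 : R, 0 < C1 /\ 0 < C2 /\ forall n, (1 <= n)%N ->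
          C1 < sigma ^- 4 * (n%:R) ^+ 2 * ssum (fun j => kappa2 n j ^+ 2) /\
          sigma ^- 4 * (n%:R) ^+ 2 * ssum (fun j => kappa2 n j ^+ 2) < C2)
  (* A3 *)
  (A3 : exists c1 c2 : R, 0 < c1 /\ 0 < c2 /\ forall n, (1 <= n)%N ->
          c1 * (n%:R) `^ (- (2 * r)) <= rho kappa2 n /\
          rho kappa2 n <= c2 * (n%:R) `^ (- (2 * r)))
  (* A4 *)
  (A4 : exists C1 lam : R, 0 < C1 /\ 1 < lam /\
          forall (delta : R) n, 0 < delta -> (1 <= n)%N ->
          kappa2 n (Num.truncn ((1 + delta) * (k n)%:R))
            < C1 * (1 + delta) `^ (- lam) * kappa2 n (k n))
  (* A5 *)
  (A5a : exists a b : R, 0 < a /\ 0 < b /\ forall n, (1 <= n)%N ->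
          a * kappa2 n (k n) <= kappa2 n 1%N /\ kappa2 n 1%N <= b * kappa2 n (k n))
  (A5b : forall c : R, 1 < c -> exists C : R, 0 < C /\ forall n, (1 <= n)%N ->
          C * kappa2 n (k n) <= kappa2 n (Num.truncn (c * (k n)%:R))) :
  let s := r / (2 - 4 * r) in
  forall c C : R, 0 < c -> 0 < C ->
  exists gamma : R, 0 < gamma /\
    forall (n : nat) (theta : nat -> R), (1 <= n)%N ->
      (forall j : nat, c * (k n)%:R < j%:R -> theta j = 0) ->
      l2norm theta <= C * (n%:R) `^ (- r) ->
      besov_ball s gamma theta.
Proof.
move=> s c C c_gt0 C_gt0.
have [C1 [C2 [C1_gt0 [_ hA2]]]] := A2.
have [c1 [c2 [_ [_ hA3]]]] := A3.
have [a [b [_ [b_gt0 hA5]]]] := A5a.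
have [K [K_gt0 k_le]] := kn_le_rate hnonneg hsumm hk A1 (ltW b_gt0)
  (fun n n_ge1 => (hA5 n n_ge1).2) (fun n n_ge1 => (hA2 n n_ge1).1)
  C1_gt0 (ltW hr1) (fun n n_ge1 => (hA3 n n_ge1).2).
have s_ge0 : 0 <= s by rewrite /s divr_ge0 ?subr_ge0; lra.
exists ((c * K) `^ (2 * s) * C ^+ 2); split.
  by rewrite mulr_gt0 ?exprn_gt0 // powR_gt0 // mulr_gt0.
move=> n theta n_ge1 theta_band theta_norm.
have ck_ge0 : 0 <= c * (k n)%:R by rewrite mulr_ge0 ?(ltW c_gt0).
apply: (besov_ball_bandlimited s_ge0 ck_ge0 theta_band).
set T := n%:R `^ (2 - 4 * r); set Q := n%:R `^ (- r).
apply: (@le_trans _ _ ((c * K * T) `^ (2 * s) * (C * Q) ^+ 2)).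
  apply: ler_pM; rewrite ?powR_ge0 ?sqr_ge0 //.
    apply: (ge0_ler_powR (mulr_ge0 _ s_ge0)); rewrite ?nnegrE //.
      by rewrite mulr_ge0 ?powR_ge0 // mulr_ge0 // ltW.
    by rewrite -mulrA ler_pM2l // k_le.
  by rewrite !expr2; apply: ler_pM => //; exact: sqrtr_ge0.
rewrite powRM ?mulr_ge0 ?powR_ge0 ?(ltW c_gt0) ?(ltW K_gt0) //.
rewrite exprMn mulrACA powR_pow_div_cancel ?mulr1 ?ltr0n //.
by rewrite gt_eqF //; lra.
Qed.
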